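(* Let $R$ be a Noetherian ring, $I$ an ideal of $R$, and $M$ a finitely generated $R$-module. Let $J=(x_1,\ldots,x_s)\subseteq I$ be a reduction of $I$ relative to $M$, and fix an integer $\ell \geq \mathrm{r}_J(I,M)$ such that $$[(x_1,\ldots,x_{i-1})M :_M x_i]\cap I^{\ell+1}M = (x_1,\ldots,x_{i-1})I^{\ell}M \quad \text{for } i=1,\ldots,s.$$ Then for all $n\geq \ell+1$, $$[(x_1,\ldots,x_{i-1})M :_M x_i]\cap I^{n}M = (x_1,\ldots,x_{i-1})I^{n-1}M \quad \text{for } i=1,\ldots,s.$$
   Context: For $i=1$ the ideal $(x_1,\ldots,x_{i-1})$ is the zero ideal. An ideal $J\subseteq I$ is a reduction of $I$ relative to $M$ if $JI^nM=I^{n+1}M$ for some $n\geq 0$; then $\mathrm{r}_J(I,M)=\min\{m\in\mathbb N: JI^mM=I^{m+1}M\}$. *)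

From mathcomp Require Import all_boot all_order all_algebra.
Set Implicit Arguments. Unset Strict Implicit. Unset Printing Implicit Defensive.
Import GRing.Theory.
Local Open Scope ring_scope.

Section Defs.
Variable R : comPzRingType.

Definition seteq {T : Type} (A B : T -> Prop) := forall t, A t <-> B t.
Definition interP {T : Type} (A B : T -> Prop) : T -> Prop := fun t => A t /\ B t.

Definition is_ideal (I : R -> Prop) : Prop :=
  [/\ I 0, (forall a b, I a -> I b -> I (a + b)) & (forall r a, I a -> I (r * a))].

Definition ideal_gen (g : seq R) : R -> Prop :=
  fun a => exists c : 'I_(size g) -> R, a = \sum_(i < size g) c i * g`_i.

Definition noetherian : Prop :=
  forall I : R -> Prop, is_ideal I -> exists g : seq R, seteq I (ideal_gen g).

Variable M : lmodType R.

Definition fin_gen_mod : Prop :=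
  exists g : seq M, forall m : M,
    exists c : 'I_(size g) -> R, m = \sum_(i < size g) c i *: g`_i.

Definition span (S : M -> Prop) : M -> Prop :=
  fun m => exists l : seq (R * M), (forall p, p \in l -> S p.2) /\
                                   m = \sum_(p <- l) p.1 *: p.2.

Definition ideal_mul (I : R -> Prop) (N : M -> Prop) : M -> Prop :=
  span (fun m => exists a n, [/\ I a, N n & m = a *: n]).

Definition pow_mod (I : R -> Prop) (n : nat) : M -> Prop :=
  iter n (ideal_mul I) (fun _ => True).

Definition seq_mul (xs : seq R) (N : M -> Prop) : M -> Prop :=
  ideal_mul (ideal_gen xs) N.

Definition colon (N : M -> Prop) (x : R) : M -> Prop := fun m => N (x *: m).

Definition is_reduction (I : R -> Prop) (xs : seq R) : Prop :=
  (forall j, (j < size xs)%N -> I xs`_j) /\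
  exists n, seteq (seq_mul xs (pow_mod I n)) (pow_mod I n.+1).

Definition is_red_number (I : R -> Prop) (xs : seq R) (r : nat) : Prop :=
  seteq (seq_mul xs (pow_mod I r)) (pow_mod I r.+1) /\
  forall m, (m < r)%N -> ~ seteq (seq_mul xs (pow_mod I m)) (pow_mod I m.+1).

End Defs.

(* For n >= l the reduction gives I^(n+2)M = J I^(n+1)M, so an element m of
   (x_1..x_(i-1))M :_M x_i lying in I^(n+2)M is a combination
   x_1 b_1 + ... + x_s b_s with b_j in I^(n+1)M.  The terms with j >= i are
   removed from the last one down: if m = x_1 b_1 + ... + x_k b_k with k > i,
   then x_k b_k lies in (x_1..x_(k-1))M (as m does, by the case n = l), so the
   case n+1 for index k puts b_k in (x_1..x_(k-1)) I^n M and x_k b_k in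
   (x_1..x_(k-1)) I^(n+1) M. *)

From Pilot Require Import Defs.
From mathcomp Require Import all_boot all_order all_algebra.
Set Implicit Arguments. Unset Strict Implicit. Unset Printing Implicit Defensive.
Import GRing.Theory.
Local Open Scope ring_scope.

Section Submodules.
Variables (R : comPzRingType) (M : lmodType R).
Implicit Types (S N : M -> Prop) (I : R -> Prop).
Local Notation pow_mod := (@Defs.pow_mod _ M).

Definition submodule N : Prop :=
  [/\ N 0, forall a b, N a -> N b -> N (a + b) & forall r a, N a -> N (r *: a)].

Lemma submodule_sum N k (F : nat -> M) :
  submodule N -> (forall j, (j < k)%N -> N (F j)) -> N (\sum_(j < k) F j).
Proof.
move=> [N0 ND _]; elim: k => [|k IHk] NF; first by rewrite big_ord0.
rewrite big_ord_recr /=; apply: ND; last exact: NF.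
by apply: IHk => j ltjk; apply/NF/ltnW.
Qed.

Lemma span_submodule S : submodule (Defs.span S).
Proof.
split.
- by exists [::]; rewrite big_nil.
- move=> _ _ [la [Sla ->]] [lb [Slb ->]]; exists (la ++ lb); split.
    by move=> p; rewrite mem_cat => /orP[/Sla|/Slb].
  by rewrite big_cat.
- move=> r _ [la [Sla ->]]; exists [seq (r * p.1, p.2) | p <- la]; split.
    by move=> _ /mapP[p /Sla Sp ->].
  by rewrite big_map scaler_sumr; apply: eq_bigr => p _; rewrite scalerA.
Qed.

Lemma sub_span S m : S m -> Defs.span S m.
Proof.
by move=> Sm; exists [:: (1, m)]; rewrite big_seq1 scale1r; split=> // p /[!inE] /eqP ->.
Qed.

Lemma span_sub S N : submodule N -> (forall m, S m -> N m) -> forall m, Defs.span S m -> N m.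
Proof.
move=> [N0 ND NZ] SN _ [l [Sl ->]]; elim: l Sl => [|p l IHl] Sl.
  by rewrite big_nil.
rewrite big_cons; apply: ND; first by apply/NZ/SN/Sl; rewrite mem_head.
by apply: IHl => q lq; apply: Sl; rewrite in_cons lq orbT.
Qed.

Lemma submoduleT : submodule (fun _ : M => True).
Proof. by []. Qed.

Lemma pow_mod_submodule I n : submodule (pow_mod I n).
Proof. by case: n => [|n]; [split | exact: span_submodule]. Qed.

Lemma pow_modZ I n a m : I a -> pow_mod I n m -> pow_mod I n.+1 (a *: m).
Proof. by move=> Ia Im; apply: sub_span; exists a, m. Qed.

Lemma pow_modS I n m : pow_mod I n.+1 m -> pow_mod I n m.
Proof.
apply: span_sub; first exact: pow_mod_submodule.
by move=> _ [a [m' [_ Im' ->]]]; have [_ _] := pow_mod_submodule I n; apply.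
Qed.

Lemma pow_mod_le I n p m : (n <= p)%N -> pow_mod I p m -> pow_mod I n m.
Proof.
by move=> /subnK <-; elim: (p - n)%N => [|d IHd] //= Im; apply/IHd/pow_modS.
Qed.

Definition lincomb (x : seq R) (k : nat) N (m : M) : Prop :=
  exists b : nat -> M, (forall j, N (b j)) /\ m = \sum_(j < k) x`_j *: b j.

Lemma lincomb_submodule x k N : submodule N -> submodule (lincomb x k N).
Proof.
move=> [N0 ND NZ]; split.
- by exists (fun _ => 0); split=> //; rewrite big1 // => j _; rewrite scaler0.
- move=> _ _ [b [Nb ->]] [c [Nc ->]]; exists (fun j => b j + c j); split.
    by move=> j; apply: ND.
  by rewrite -big_split; apply: eq_bigr => j _; rewrite scalerDr.
- move=> r _ [b [Nb ->]]; exists (fun j => r *: b j); split; first by move=> j; apply: NZ.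
  by rewrite scaler_sumr; apply: eq_bigr => j _; rewrite !scalerA mulrC.
Qed.

Lemma lincomb_widen x i k N N' m :
  N' 0 -> (i <= k)%N -> (forall y, N y -> N' y) -> lincomb x i N m -> lincomb x k N' m.
Proof.
move=> N'0 leik NN' [b [Nb ->]].
exists (fun j => if (j < i)%N then b j else 0); split.
  by move=> j; case: ifP => _ //; apply: NN'.
rewrite (big_ord_widen k (fun j => x`_j *: b j) leik) big_mkcond /=.
by apply: eq_bigr => j _; case: ifP; rewrite ?scaler0.
Qed.

Lemma lincombSr x k N m :
  lincomb x k.+1 N m ->
  exists m' b, [/\ lincomb x k N m', N b & m = m' + x`_k *: b].
Proof.
move=> [b [Nb ->]]; exists (\sum_(j < k) x`_j *: b j), (b k).
by rewrite big_ord_recr; split=> //; exists b.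
Qed.

Lemma lincombZ I x k n a m :
  I a -> lincomb x k (pow_mod I n) m -> lincomb x k (pow_mod I n.+1) (a *: m).
Proof.
move=> Ia [b [Ib ->]]; exists (fun j => a *: b j); split; first by move=> j; apply: pow_modZ.
by rewrite scaler_sumr; apply: eq_bigr => j _; rewrite !scalerA mulrC.
Qed.

Lemma lincomb_pow_mod I x k n m :
  (forall j, (j < k)%N -> I x`_j) -> lincomb x k (pow_mod I n) m -> pow_mod I n.+1 m.
Proof.
move=> xI [b [Ib ->]].
apply: (submodule_sum (F := fun j => x`_j *: b j)) => [|j ltjk]; first exact: pow_mod_submodule.
exact/pow_modZ/Ib/xI.
Qed.

Lemma ideal_gen_nth (t : seq R) j : (j < size t)%N -> ideal_gen t t`_j.
Proof.
move=> ltjt; exists (fun i : 'I_(size t) => (i == Ordinal ltjt)%:R).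
rewrite (bigD1 (Ordinal ltjt)) //= eqxx mul1r big1 ?addr0 // => i /negPf ->.
by rewrite mul0r.
Qed.

Lemma seq_mul_lincomb t N m :
  submodule N -> seq_mul t N m <-> lincomb t (size t) N m.
Proof.
move=> subN; have [_ _ NZ] := subN; split.
- apply: span_sub; first exact: lincomb_submodule.
  move=> _ [_ [n [[c ->] Nn ->]]].
  pose c' j := odflt 0 (omap c (insub j)).
  exists (fun j => c' j *: n); split; first by move=> j; apply: NZ.
  by rewrite scaler_suml; apply: eq_bigr => i _; rewrite scalerA mulrC /c' valK.
- move=> [b [Nb ->]]; apply: (submodule_sum (F := fun j => t`_j *: b j)) => [|j ltjt].
    exact: span_submodule.
  by apply: sub_span; exists t`_j, (b j); split=> //; apply: ideal_gen_nth.
Qed.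

Lemma seq_mul_take_lincomb x k N m :
  submodule N -> (k <= size x)%N ->
  seq_mul (take k x) N m <-> lincomb x k N m.
Proof.
move=> subN lekx; have := seq_mul_lincomb (take k x) m subN; rewrite size_takel //.
suff sum_take (b : nat -> M) : \sum_(j < k) (take k x)`_j *: b j = \sum_(j < k) x`_j *: b j.
  move=> [toL ofL]; split=> [/toL [b [Nb ->]] | [b [Nb Em]]].
    by exists b; rewrite sum_take.
  by apply: ofL; exists b; rewrite Em sum_take.
by apply: eq_bigr => j _; rewrite nth_take.
Qed.

(* Once J I^r M = I^(r+1) M, multiplying by I gives J I^n M = I^(n+1) M for n >= r. *)
Lemma reduction_pow_mod I x r :
  (forall m, pow_mod I r.+1 m -> lincomb x (size x) (pow_mod I r) m) ->
  forall n m, (r <= n)%N -> pow_mod I n.+1 m -> lincomb x (size x) (pow_mod I n) m.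
Proof.
move=> Jr n m /subnK <-; elim: (n - r)%N m => [|d IHd] // m.
apply: span_sub; first exact/lincomb_submodule/pow_mod_submodule.
by move=> _ [a [m' [Ia Im' ->]]]; apply/lincombZ/IHd.
Qed.

End Submodules.

Section ColonIntersection.
Variables (R : comPzRingType) (M : lmodType R) (I : R -> Prop) (x : seq R).
Hypothesis xI : forall j, (j < size x)%N -> I x`_j.

Local Notation allM := (fun _ : M => True).
Local Notation pow_mod := (@Defs.pow_mod _ M).

(* [(x_1..x_i)M :_M x_(i+1)] /\ I^(p+1)M is contained in (x_1..x_i) I^p M;
   indices are 0-based as in the statement. *)
Definition colon_cap_sub (p : nat) : Prop :=
  forall i m, (i < size x)%N ->
    lincomb x i allM (x`_i *: m) -> pow_mod I p.+1 m -> lincomb x i (pow_mod I p) m.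

Lemma lincomb_colon_cap i p m :
  (i < size x)%N -> lincomb x i (pow_mod I p) m ->
  lincomb x i allM (x`_i *: m) /\ pow_mod I p.+1 m.
Proof.
move=> ltix Jm; split.
  have [_ _ LZ] := lincomb_submodule x i (pow_mod_submodule M I p).
  exact: lincomb_widen (LZ _ _ Jm).
by apply: lincomb_pow_mod Jm => j ltji; apply/xI/(ltn_trans ltji).
Qed.

Lemma lincomb_peel p i k m :
  colon_cap_sub p -> (i <= k)%N -> (k < size x)%N -> lincomb x i allM m ->
  lincomb x k.+1 (pow_mod I p.+1) m -> lincomb x k (pow_mod I p.+1) m.
Proof.
move=> IHp leik ltkx Jm /lincombSr[m' [b [Jm' Ib Em]]].
have [_ LD _] := lincomb_submodule x k (pow_mod_submodule M I p.+1).
rewrite Em; apply: LD => //; apply/lincombZ/IHp => //; first exact: xI.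
have -> : x`_k *: b = m + (-1) *: m' by rewrite Em scaleN1r addrAC subrr add0r.
have [_ TD TZ] := lincomb_submodule x k (submoduleT M).
apply: TD; first exact: lincomb_widen Jm.
by apply: TZ; apply: lincomb_widen Jm'.
Qed.

Lemma lincomb_descend p i k m :
  colon_cap_sub p -> (i <= k)%N -> (k <= size x)%N -> lincomb x i allM m ->
  lincomb x k (pow_mod I p.+1) m -> lincomb x i (pow_mod I p.+1) m.
Proof.
move=> IHp + + Jm; elim: k => [|k IHk]; first by rewrite leqn0 => /eqP ->.
rewrite leq_eqVlt ltnS => /predU1P[-> // | leik] ltkx Jkm.
by apply: IHk => //; [exact: ltnW | apply: (lincomb_peel IHp leik ltkx Jm)].
Qed.

Lemma colon_cap_subS l p :
  (forall m, pow_mod I p.+2 m -> lincomb x (size x) (pow_mod I p.+1) m) ->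
  (l <= p)%N -> colon_cap_sub l -> colon_cap_sub p -> colon_cap_sub p.+1.
Proof.
move=> reduction lelp base IHp i m ltix xm Im.
apply: (lincomb_descend IHp (ltnW ltix) (leqnn _)); last exact: reduction.
have [I0 _ _] := pow_mod_submodule M I l.
apply: lincomb_widen (base _ _ ltix xm _) => //.
by apply: pow_mod_le Im; rewrite !ltnS (leq_trans lelp).
Qed.

Lemma colon_cap_sub_ge l :
  (forall p m, (l <= p)%N -> pow_mod I p.+1 m -> lincomb x (size x) (pow_mod I p) m) ->
  colon_cap_sub l -> forall p, (l <= p)%N -> colon_cap_sub p.
Proof.
move=> reduction base p /subnK <-; elim: (p - l)%N => [|d IHd] //=.
apply: (colon_cap_subS _ (leq_addl d l)) => // m; apply: reduction.
exact: leq_trans (leq_addl d l) (leqnSn _).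
Qed.

End ColonIntersection.

Theorem proposition3p5 (R : comPzRingType) (M : lmodType R) (I : R -> Prop)
    (x : seq R) (l : nat) :
  noetherian R -> is_ideal I -> fin_gen_mod M ->
  is_reduction M I x ->
  (exists r, is_red_number M I x r /\ (r <= l)%N) ->
  (forall i, (i < size x)%N ->
     seteq (interP (colon (seq_mul (take i x) (fun _ : M => True)) x`_i)
                   (pow_mod (M:=M) I l.+1))
           (seq_mul (take i x) (pow_mod (M:=M) I l))) ->
  forall n i, (l.+1 <= n)%N -> (i < size x)%N ->
     seteq (interP (colon (seq_mul (take i x) (fun _ : M => True)) x`_i)
                   (pow_mod (M:=M) I n))
           (seq_mul (take i x) (pow_mod (M:=M) I n.-1)).
Proof.
move=> _ _ _ [xI _] [r [[Jr _] lerl]] base n i ltln ltix.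
have colonE k m : (k <= size x)%N ->
    colon (seq_mul (take k x) (fun _ : M => True)) x`_k m <->
    lincomb x k (fun _ => True) (x`_k *: m).
  exact: (seq_mul_take_lincomb (x`_k *: m) (submoduleT M)).
have seq_mulE k p (m : M) : (k <= size x)%N ->
    seq_mul (take k x) (pow_mod I p) m <-> lincomb x k (pow_mod I p) m.
  exact: (seq_mul_take_lincomb m (pow_mod_submodule M I p)).
have reduction p (m : M) : (l <= p)%N -> pow_mod I p.+1 m ->
    lincomb x (size x) (pow_mod I p) m.
  move=> lelp; apply: reduction_pow_mod (leq_trans lerl lelp) => m' /Jr.
  by rewrite -[in seq_mul _](take_size x) => /seq_mulE; apply.
have base_l : colon_cap_sub M I x l.
  move=> k m ltkx /(colonE _ _ (ltnW ltkx)) xm Im.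
  by apply/seq_mulE; [exact: ltnW | apply/(base k ltkx)].
have {}base := colon_cap_sub_ge xI reduction base_l.
case: n ltln => // p; rewrite ltnS => lelp m; split.
  move=> [/(colonE _ _ (ltnW ltix)) xm Im].
  by apply/seq_mulE; [exact: ltnW | exact: base].
move=> /(seq_mulE _ _ _ (ltnW ltix)) /(lincomb_colon_cap xI ltix) [xm Im].
by split=> //; apply/colonE; first exact: ltnW.
Qed.
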